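(* Let $H$ and $A$ be Hopf quasigroups and let $A$ be a left $H$-quasimodule Hopf quasigroup such that for all $g,h\in H$ and $a\in A$, $$h_{(1)}\otimes h_{(2)}\cdot a=h_{(2)}\otimes h_{(1)}\cdot a,\qquad g\cdot(S_H(h)\cdot a)=(gS_H(h))\cdot a.$$ Then the map $R:H\otimes A\to A\otimes H$, $R(h\otimes a)=h_{(1)}\cdot a\otimes h_{(2)}$, is a coalgebra map which is left multiplicative, normal, left conormal, right $S_H$-multiplicative and right $S_H$-conormal. Consequently $A\otimes H$ with multiplication $(a\otimes h)(b\otimes g)=a(h_{(1)}\cdot b)\otimes h_{(2)}g$, unit $1_A\otimes 1_H$, tensor product coproduct and counit, and antipode $S(a\otimes h)=R(S_H(h)\otimes S_A(a))$ is a Hopf quasigroup.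
   Context: All algebras are unital but not necessarily associative; Sweedler notation. A Hopf quasigroup is $(H,\mu_H,1_H,\Delta_H,\varepsilon_H,S_H)$ where $(H,\mu_H,1_H)$ is a unital (not necessarily associative) algebra, $(H,\Delta_H,\varepsilon_H)$ is a coassociative counital coalgebra, $\Delta_H,\varepsilon_H$ are unital algebra maps, and $S_H$ is linear with $S_H(h_{(1)})(h_{(2)}g)=\varepsilon_H(h)g=h_{(1)}(S_H(h_{(2)})g)$ and $(gh_{(1)})S_H(h_{(2)})=\varepsilon_H(h)g=(gS_H(h_{(1)}))h_{(2)}$. $A$ is a left $H$-quasimodule Hopf quasigroup if there is a linear map $H\otimes A\to A$, $h\otimes a\mapsto h\cdot a$, with $1_H\cdot a=a$, $h_{(1)}\cdot(S_H(h_{(2)})\cdot a)=\varepsilon_H(h)a=S_H(h_{(1)})\cdot(h_{(2)}\cdot a)$, $(h_{(1)}\cdot a)(h_{(2)}\cdot b)=h\cdot(ab)$, $h\cdot 1_A=\varepsilon_H(h)1_A$, $\Delta_A(h\cdot a)=h_{(1)}\cdot a_{(1)}\otimes h_{(2)}\cdot a_{(2)}$, $\varepsilon_A(h\cdot a)=\varepsilon_H(h)\varepsilon_A(a)$ for all $h\in H$, $a,b\in A$. Notation $R(h\otimes a)=\sum_R a_R\otimes h^R$; iterated $\sum_{R,r}a_{Rr}\otimes x^ry^R$ means first $R(y\otimes a)$, then $R(x\otimes a_R)$. $R$ is: a coalgebra map if $\sum_R a_{R(1)}\otimes h^R_{(1)}\otimes a_{R(2)}\otimes h^R_{(2)}=\sum_{R,r}a_{(1)R}\otimes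 h_{(1)}^R\otimes a_{(2)r}\otimes h_{(2)}^r$ and $\sum_R\varepsilon_A(a_R)\varepsilon_H(h^R)=\varepsilon_H(h)\varepsilon_A(a)$; left multiplicative if $\sum_R(ab)_R\otimes h^R=\sum_{R,r}a_Rb_r\otimes h^{Rr}$ (first $R(h\otimes a)$, then $R(h^R\otimes b)$); normal if $R(h\otimes 1_A)=1_A\otimes h$ and $R(1_H\otimes a)=a\otimes 1_H$; left conormal if $\sum_R\varepsilon_A(a_R)h^R=\varepsilon_A(a)h$; right $S_H$-multiplicative if $\sum_R a_R\otimes(gS_H(h))^R=\sum_{R,r}a_{Rr}\otimes g^rS_H(h)^R$; right $S_H$-conormal if $\sum_{R,r}a_{Rr}\varepsilon_H(S_H(h^R)^r)=\varepsilon_H(h)a$ (first $R(h\otimes a)$, then $R(S_H(h^R)\otimes a_R)$), for all $a,b\in A$, $g,h\in H$. *)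

(* Tensor products are not in the library: we axiomatize "a tensor product
   of U and V" by the defining data (carrier, bilinear pure-tensor map,
   spanning, universal lifting of bilinear maps); such objects exist and are
   unique up to isomorphism, and the theorem quantifies over arbitrary ones.
   Sweedler sums  sum beta(x_(1), x_(2))  of an element t of U (x) V are
   written  tev t_str beta t  (= the linear map induced by the bilinear beta). *)
From HB Require Import structures.
From mathcomp Require Import all_boot all_order all_algebra.
Set Implicit Arguments. Unset Strict Implicit. Unset Printing Implicit Defensive.
Import GRing.Theory.
Local Open Scope ring_scope.

Section Defs.
Variable K : fieldType.

Definition lin (U V : lmodType K) (f : U -> V) : Prop :=
  forall (c : K) (x y : U), f (c *: x + y) = c *: f x + f y.

Definition linK (U : lmodType K) (f : U -> K) : Prop :=
  forall (c : K) (x y : U), f (c *: x + y) = c * f x + f y.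

Definition bilin (U V W : lmodType K) (f : U -> V -> W) : Prop :=
  (forall v, lin (fun u => f u v)) /\ (forall u, lin (f u)).

Definition trilin (U V W X : lmodType K) (f : U -> V -> W -> X) : Prop :=
  [/\ forall v w, lin (fun u => f u v w),
      forall u w, lin (fun v => f u v w) &
      forall u v, lin (f u v)].

Definition quadrilin (U V W Y X : lmodType K) (f : U -> V -> W -> Y -> X) : Prop :=
  [/\ forall v w y, lin (fun u => f u v w y),
      forall u w y, lin (fun v => f u v w y),
      forall u v y, lin (fun w => f u v w y) &
      forall u v w, lin (f u v w)].

Record tensor (U V : lmodType K) := Tensor {
  tT : lmodType K;
  tm : U -> V -> tT;
  tm_bilin : bilin tm;
  tm_span : forall t : tT, exists s : seq (U * V),
      t = \sum_(p <- s) tm p.1 p.2;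
  tlift : forall W : lmodType K, (U -> V -> W) -> tT -> W;
  tlift_lin : forall (W : lmodType K) (b : U -> V -> W), bilin b -> lin (tlift b);
  tlift_tm : forall (W : lmodType K) (b : U -> V -> W), bilin b ->
      forall u v, tlift b (tm u v) = b u v
}.

Definition tev (U V : lmodType K) (T : tensor U V) (W : lmodType K)
  (b : U -> V -> W) (t : tT T) : W := @tlift U V T W b t.
Arguments tev {U V} T {W} b t.

Record hopf_quasigroup (H : lmodType K) (HH : tensor H H)
  (mul : H -> H -> H) (one : H) (cop : H -> tT HH) (eps : H -> K)
  (S : H -> H) : Prop := {
  hq_mul_bilin : bilin mul;
  hq_unitl : forall h, mul one h = h;
  hq_unitr : forall h, mul h one = h;
  hq_cop_lin : lin cop;
  hq_eps_lin : linK eps;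
  hq_S_lin : lin S;
  (* coassociativity, (cop (x) id) cop = (id (x) cop) cop, tested on all
     trilinear maps (i.e. as an equality in H (x) H (x) H) *)
  hq_coassoc : forall (W : lmodType K) (f : H -> H -> H -> W), trilin f ->
    forall h,
      tev HH (fun x y => tev HH (fun u v => f u v y) (cop x)) (cop h)
    = tev HH (fun x y => tev HH (fun u v => f x u v) (cop y)) (cop h);
  hq_counitl : forall h, tev HH (fun x y => eps x *: y) (cop h) = h;
  hq_counitr : forall h, tev HH (fun x y => eps y *: x) (cop h) = h;
  hq_cop_mul : forall g h, cop (mul g h) =
    tev HH (fun x y => tev HH (fun u v => tm HH (mul x u) (mul y v)) (cop h)) (cop g);
  hq_cop_one : cop one = tm HH one one;
  hq_eps_mul : forall g h, eps (mul g h) = eps g * eps h;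
  hq_eps_one : eps one = 1;
  hq_S1 : forall g h, tev HH (fun x y => mul (S x) (mul y g)) (cop h) = eps h *: g;
  hq_S2 : forall g h, tev HH (fun x y => mul x (mul (S y) g)) (cop h) = eps h *: g;
  hq_S3 : forall g h, tev HH (fun x y => mul (mul g x) (S y)) (cop h) = eps h *: g;
  hq_S4 : forall g h, tev HH (fun x y => mul (mul g (S x)) y) (cop h) = eps h *: g
}.

Record quasimodule_hopf_quasigroup (H A : lmodType K) (HH : tensor H H)
  (AA : tensor A A)
  (oneH : H) (copH : H -> tT HH) (epsH : H -> K) (SH : H -> H)
  (mulA : A -> A -> A) (oneA : A) (copA : A -> tT AA) (epsA : A -> K)
  (act : H -> A -> A) : Prop := {
  qm_bilin : bilin act;
  qm_one : forall a, act oneH a = a;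
  qm_S1 : forall h a, tev HH (fun x y => act x (act (SH y) a)) (copH h) = epsH h *: a;
  qm_S2 : forall h a, tev HH (fun x y => act (SH x) (act y a)) (copH h) = epsH h *: a;
  qm_mul : forall h a b,
    tev HH (fun x y => mulA (act x a) (act y b)) (copH h) = act h (mulA a b);
  qm_unit : forall h, act h oneA = epsH h *: oneA;
  qm_cop : forall h a, copA (act h a) =
    tev HH (fun x y => tev AA (fun u v => tm AA (act x u) (act y v)) (copA a)) (copH h);
  qm_eps : forall h a, epsA (act h a) = epsH h * epsA a
}.
End Defs.
Arguments tev {K U V} T {W} b t.

Section Smash.
Variable K : fieldType.
Variables H A : lmodType K.
Variables (HH : tensor H H) (AA : tensor A A) (HA : tensor H A) (AH : tensor A H).
Variables (mulH : H -> H -> H) (oneH : H) (copH : H -> tT HH) (epsH : H -> K)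
  (SH : H -> H).
Variables (mulA : A -> A -> A) (oneA : A) (copA : A -> tT AA) (epsA : A -> K)
  (SA : A -> A).
Variable act : H -> A -> A.

Section RProps.
Variable R : tT HA -> tT AH.

(* R is a coalgebra map; the first identity is an equality in
   A (x) H (x) A (x) H, tested on all 4-linear maps. *)
Definition R_coalgebra_map : Prop :=
  (forall (W : lmodType K) (f : A -> H -> A -> H -> W), quadrilin f ->
    forall (h : H) (a : A),
      tev AH (fun a' h' => tev AA (fun a1 a2 =>
                 tev HH (fun h1 h2 => f a1 h1 a2 h2) (copH h')) (copA a'))
          (R (tm HA h a))
    = tev HH (fun h1 h2 => tev AA (fun a1 a2 =>
         tev AH (fun x y => tev AH (fun x' y' => f x y x' y')
                                   (R (tm HA h2 a2)))
                (R (tm HA h1 a1))) (copA a)) (copH h))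
  /\ (forall (h : H) (a : A),
      tev AH (fun x y => (epsA x * epsH y : K^o)) (R (tm HA h a))
      = epsH h * epsA a).

Definition R_left_multiplicative : Prop :=
  forall (h : H) (a b : A),
    R (tm HA h (mulA a b)) =
    tev AH (fun x y => tev AH (fun u v => tm AH (mulA x u) v) (R (tm HA y b)))
        (R (tm HA h a)).

Definition R_normal : Prop :=
  (forall h : H, R (tm HA h oneA) = tm AH oneA h) /\
  (forall a : A, R (tm HA oneH a) = tm AH a oneH).

Definition R_left_conormal : Prop :=
  forall (h : H) (a : A),
    tev AH (fun x y => epsA x *: y) (R (tm HA h a)) = epsA a *: h.

Definition R_right_S_multiplicative : Prop :=
  forall (g h : H) (a : A),
    R (tm HA (mulH g (SH h)) a) =
    tev AH (fun x y => tev AH (fun u v => tm AH u (mulH v y)) (R (tm HA g x)))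
        (R (tm HA (SH h) a)).

Definition R_right_S_conormal : Prop :=
  forall (h : H) (a : A),
    tev AH (fun x y => tev AH (fun u v => epsH v *: u) (R (tm HA (SH y) x)))
        (R (tm HA h a))
    = epsH h *: a.
End RProps.

Definition Rmap : tT HA -> tT AH :=
  tev HA (fun h a => tev HH (fun x y => tm AH (act x a) y) (copH h)).

Definition smash_mul (s t : tT AH) : tT AH :=
  tev AH (fun a h => tev AH (fun b g =>
     tev HH (fun h1 h2 => tm AH (mulA a (act h1 b)) (mulH h2 g)) (copH h)) t) s.

Definition smash_one : tT AH := tm AH oneA oneH.

Definition smash_cop (XX : tensor (tT AH) (tT AH)) (s : tT AH) : tT XX :=
  tev AH (fun a h => tev AA (fun a1 a2 =>
     tev HH (fun h1 h2 => tm XX (tm AH a1 h1) (tm AH a2 h2)) (copH h))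
     (copA a)) s.

Definition smash_eps (s : tT AH) : K :=
  tev AH (fun a h => (epsA a * epsH h : K^o)) s.

Definition smash_S (s : tT AH) : tT AH :=
  tev AH (fun a h => Rmap (tm HA (SH h) (SA a))) s.
End Smash.

(* Every identity to be proved is an equality of linear maps out of tensor
   products, so it suffices to check it on pure tensors, where Sweedler sums
   become nested tensor evaluations; these are rearranged by coassociativity and
   by exchanging independent sums.  Beyond the axioms the argument needs three
   facts: the antipode of a Hopf quasigroup is an anti-coalgebra map; the action
   of H commutes with the antipode of A; and the hypothesis
   h_(1) (x) h_(2).a = h_(2) (x) h_(1).a lets the two legs of the coproduct of h
   be exchanged whenever the action is applied to one of them.  With these,
   each axiom of A (x) H splits into the corresponding axioms of A and of H and
   the quasimodule axioms, and likewise for the properties of R. *)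

From HB Require Import structures.
From mathcomp Require Import all_boot all_order all_algebra.
From Stdlib Require Import FunctionalExtensionality.
Import GRing.Theory.
Local Open Scope ring_scope.

Set Implicit Arguments. Unset Strict Implicit. Unset Printing Implicit Defensive.

Section Linearity.
Variable K : fieldType.

Lemma lin_add (U V : lmodType K) (f : U -> V) : lin f -> forall x y, f (x + y) = f x + f y.
Proof. by move=> L x y; have := L 1 x y; rewrite !scale1r. Qed.

Lemma lin0 (U V : lmodType K) (f : U -> V) : lin f -> f 0 = 0.
Proof.
move=> L; have := lin_add L 0 0; rewrite addr0 => /eqP.
by rewrite -subr_eq0 opprD addrA subrr sub0r oppr_eq0 => /eqP.
Qed.

Lemma linZ (U V : lmodType K) (f : U -> V) c x : lin f -> f (c *: x) = c *: f x.
Proof. by move=> L; have := L c x 0; rewrite !addr0 lin0 // addr0. Qed.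

Lemma lin_sum (U V : lmodType K) (f : U -> V) (I : Type) (s : seq I) (F : I -> U) :
  lin f -> f (\sum_(i <- s) F i) = \sum_(i <- s) f (F i).
Proof.
move=> L; elim: s => [|i s IH]; first by rewrite !big_nil lin0.
by rewrite !big_cons lin_add // IH.
Qed.

Lemma lin_id (U : lmodType K) : lin (fun x : U => x).
Proof. by []. Qed.

Lemma lin_comp (U V W : lmodType K) (f : V -> W) (g : U -> V) :
  lin f -> lin g -> lin (fun x => f (g x)).
Proof. by move=> Lf Lg c x y; rewrite Lg Lf. Qed.

Lemma lin_addf (U V : lmodType K) (f g : U -> V) :
  lin f -> lin g -> lin (fun x => f x + g x).
Proof.
move=> Lf Lg c x y; rewrite Lf Lg scalerDr.
by rewrite -!addrA; congr (_ + _); rewrite addrCA.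
Qed.

Lemma lin_scale (V : lmodType K) (c : K) : lin (fun v : V => c *: v).
Proof. by move=> d x y; rewrite scalerDr !scalerA mulrC. Qed.

Lemma lin_scalel (U V : lmodType K) (e : U -> K) (v : V) :
  linK e -> lin (fun x => e x *: v).
Proof. by move=> Le c x y; rewrite Le scalerDl scalerA. Qed.

Lemma linK_lin (U : lmodType K) (e : U -> K) : linK e -> lin (e : U -> K^o).
Proof. by []. Qed.

Lemma lin_compK (U V : lmodType K) (e : V -> K) (g : U -> V) :
  linK e -> lin g -> lin (fun x => (e (g x) : K^o)).
Proof. by move=> Le Lg c x y; rewrite Lg Le. Qed.

Lemma lin_mulKl (U V : lmodType K) (e : V -> K) (g : U -> V) (c : K) :
  linK e -> lin g -> lin (fun x => (e (g x) * c : K^o)).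
Proof. by move=> Le Lg d x y; rewrite Lg Le mulrDl -mulrA. Qed.

Lemma lin_mulKr (U V : lmodType K) (e : V -> K) (g : U -> V) (c : K) :
  linK e -> lin g -> lin (fun x => (c * e (g x) : K^o)).
Proof. by move=> Le Lg d x y; rewrite Lg Le mulrDr mulrCA. Qed.

Section Tensor.
Variables (U V : lmodType K) (T : tensor U V).

Lemma tm_linl v : lin (fun u => tm T u v).
Proof. exact: (tm_bilin T).1. Qed.

Lemma tm_linr u : lin (tm T u).
Proof. exact: (tm_bilin T).2. Qed.

Lemma tev_tm (W : lmodType K) (b : U -> V -> W) u v :
  bilin b -> tev T b (tm T u v) = b u v.
Proof. by move=> Hb; rewrite /tev (tlift_tm T Hb). Qed.

Lemma tev_lin (W : lmodType K) (b : U -> V -> W) : bilin b -> lin (tev T b).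
Proof. by move=> Hb; exact (@tlift_lin _ _ _ T _ _ Hb). Qed.

Lemma tensor_ext (W : lmodType K) (F G : tT T -> W) :
  lin F -> lin G -> (forall u v, F (tm T u v) = G (tm T u v)) -> forall t, F t = G t.
Proof.
move=> LF LG E t; have [s ->] := tm_span t.
by rewrite !lin_sum //; apply: eq_bigr => p _.
Qed.

Lemma tev_comp (W W' : lmodType K) (L : W -> W') (b : U -> V -> W) t :
  lin L -> bilin b -> bilin (fun x y => L (b x y)) ->
  L (tev T b t) = tev T (fun x y => L (b x y)) t.
Proof.
move=> LL Lb Lb'; apply: (tensor_ext (F := fun t => L (tev T b t))) => //.
- exact: lin_comp (tev_lin Lb).
- exact: tev_lin.
- by move=> u v; rewrite !tev_tm.
Qed.

Lemma lin_tev_param (X W : lmodType K) (G : X -> U -> V -> W) t :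
  (forall x, bilin (G x)) -> (forall u v, lin (fun x => G x u v)) ->
  lin (fun x => tev T (G x) t).
Proof.
move=> B L; have [s ->] := tm_span t.
have E x : tev T (G x) (\sum_(p <- s) tm T p.1 p.2) = \sum_(p <- s) G x p.1 p.2.
  by rewrite lin_sum; [apply: eq_bigr => p _; rewrite tev_tm | apply: tev_lin].
move=> c x y; rewrite !E; elim: s {E} => [|p s IH]; first by rewrite !big_nil scaler0 addr0.
rewrite !big_cons IH L scalerDr -!addrA; congr (_ + _); by rewrite addrCA.
Qed.

End Tensor.
End Linearity.

(* [closed t] fails when [t] mentions a variable bound in the goal. *)
Ltac closed t := let _ := type of t in idtac.
Ltac from_context := match goal with H : _ |- _ => solve [eapply H] end.

(* [lin_tac] and [multilin_tac] prove (multi)linearity of expressions built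
   from tensor evaluations, tensors, scalings and the linear maps (structure
   maps, actions, ...) whose linearity is an assumption of the context; this
   is why the sections below put such facts in the context with [Let]. *)
Ltac close_lin :=
  first
  [ exact: lin_id
  | exact: lin_scale
  | exact: tm_linl
  | exact: tm_linr
  | (apply: tev_lin; multilin_tac)
  | from_context
  | (apply: lin_scalel; from_context)
  | (apply: linK_lin; from_context) ]
with lin_tac :=
  cbv beta;
  match goal with
  | |- lin (fun x => x) => exact: lin_id
  | |- lin (fun x => @?f x + @?g x) => apply: (lin_addf (f:=f) (g:=g)); lin_tac
  | |- lin (fun x => @tev _ _ _ ?T _ ?b (@?g x)) =>
       closed b;
       apply: (lin_comp (f := tev T b) (g := g)); [apply: tev_lin; multilin_tac | lin_tac]
  | |- lin (fun x => @tev _ _ _ ?T _ (@?G x) ?t) =>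
       closed t;
       apply: (lin_tev_param (G := G)); [intro; multilin_tac | intros; lin_tac]
  | |- lin (fun x => ?e (@?g x) * ?c) => closed e; closed c;
       apply: (lin_mulKl (e := e) (g := g)); [from_context | lin_tac]
  | |- lin (fun x => ?c * ?e (@?g x)) => closed e; closed c;
       apply: (lin_mulKr (e := e) (g := g)); [from_context | lin_tac]
  | |- lin (fun x => ?e (@?g x) *: ?v) =>
       closed e; closed v;
       apply: (lin_comp (f := fun z => e z *: v) (g := g)); [close_lin | lin_tac]
  | |- lin (fun x => ?F (@?g x)) => closed F;
       apply: (lin_compK (e := F) (g := g)); [from_context | lin_tac]
  | |- lin (fun x => ?F (@?g x)) => closed F;
       apply: (lin_comp (f := F) (g := g)); [close_lin | lin_tac]
  | |- lin (fun x => ?F (@?g x) ?y) => closed F; closed y;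
       apply: (lin_comp (f := fun z => F z y) (g := g)); [close_lin | lin_tac]
  | |- lin (fun x => ?F (@?g x) ?y ?z) => closed F; closed y; closed z;
       apply: (lin_comp (f := fun w => F w y z) (g := g)); [close_lin | lin_tac]
  | |- lin (fun x => ?F (@?g x) ?y ?z ?w) => closed F; closed y; closed z; closed w;
       apply: (lin_comp (f := fun v => F v y z w) (g := g)); [close_lin | lin_tac]
  | |- lin _ => close_lin
  end
with multilin_tac :=
  cbv beta;
  lazymatch goal with
  | |- bilin _ => split; intros; lin_tac
  | |- trilin _ => split; intros; lin_tac
  | |- quadrilin _ => split; intros; lin_tac
  | |- lin _ => lin_tac
  end.

Section TensorEvaluation.
Variable K : fieldType.

Lemma tev_ext (U V W : lmodType K) (T : tensor U V) (b1 b2 : U -> V -> W) t :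
  (forall x y, b1 x y = b2 x y) -> tev T b1 t = tev T b2 t.
Proof.
move=> E; have -> // : b1 = b2.
by apply: functional_extensionality => x; apply: functional_extensionality => y.
Qed.

Lemma tev_swap (U1 V1 U2 V2 W : lmodType K) (T1 : tensor U1 V1) (T2 : tensor U2 V2)
  (F : U1 -> V1 -> U2 -> V2 -> W) t1 t2 :
  quadrilin F ->
  tev T1 (fun x y => tev T2 (fun u v => F x y u v) t2) t1 =
  tev T2 (fun u v => tev T1 (fun x y => F x y u v) t1) t2.
Proof.
case=> F1 F2 F3 F4.
apply: (tensor_ext (F := fun t1 => tev T1 (fun x y => tev T2 (fun u v => F x y u v) t2) t1)
                   (G := fun t1 => tev T2 (fun u v => tev T1 (fun x y => F x y u v) t1) t2)).
- lin_tac.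
- lin_tac.
- move=> a b; rewrite tev_tm; last by multilin_tac.
  apply: tev_ext => u v; rewrite tev_tm //; multilin_tac.
Qed.

Lemma tev_tev (U1 V1 U2 V2 W : lmodType K) (T1 : tensor U1 V1) (T2 : tensor U2 V2)
  (b1 : U1 -> V1 -> W) (b2 : U2 -> V2 -> tT T1) t :
  bilin b1 -> bilin b2 ->
  tev T1 b1 (tev T2 b2 t) = tev T2 (fun x y => tev T1 b1 (b2 x y)) t.
Proof. move=> B1 B2; apply: tev_comp => //; [exact: tev_lin | multilin_tac]. Qed.

Lemma bilin_comp (U V W W' : lmodType K) (L : W -> W') (b : U -> V -> W) :
  lin L -> bilin b -> bilin (fun x y => L (b x y)).
Proof. move=> LL [B1 B2]; split=> [v|u]; exact: lin_comp. Qed.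

Lemma tev_pull (U V W W' : lmodType K) (T : tensor U V) (L : W -> W') (b : U -> V -> W) t :
  lin L -> bilin b -> tev T (fun x y => L (b x y)) t = L (tev T b t).
Proof. move=> LL Lb; rewrite tev_comp //; exact: bilin_comp. Qed.

Lemma tev_pull_eq (U V W W' : lmodType K) (T : tensor U V) (L : W -> W')
  (b : U -> V -> W) (F : U -> V -> W') t :
  lin L -> bilin b -> (forall x y, F x y = L (b x y)) -> tev T F t = L (tev T b t).
Proof. by move=> LL Lb E; rewrite (tev_ext _ E) tev_pull. Qed.

End TensorEvaluation.

Tactic Notation "pull" constr(L) constr(b) :=
  rewrite (tev_pull_eq (L:=L) (b:=b));
  try solve [ multilin_tac | move=> ??; reflexivity ].
Tactic Notation "push" constr(L) constr(b) :=
  rewrite (tev_comp (L:=L) (b:=b)); [cbv beta | try solve [ multilin_tac ] ..].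
Ltac rewrite_tev_tev := rewrite tev_tev; [|by multilin_tac|by multilin_tac].
Ltac rewrite_tev_tm := rewrite tev_tm; [|by multilin_tac].

Section Coalgebra.
Variable K : fieldType.
Variables (C : lmodType K) (CC : tensor C C) (cop : C -> tT CC) (eps : C -> K).
Hypothesis cop_lin : lin cop.
Hypothesis eps_lin : linK eps.
Hypothesis coassoc : forall (W : lmodType K) (f : C -> C -> C -> W), trilin f ->
    forall h,
      tev CC (fun x y => tev CC (fun u v => f u v y) (cop x)) (cop h)
    = tev CC (fun x y => tev CC (fun u v => f x u v) (cop y)) (cop h).
Hypothesis counitl : forall h, tev CC (fun x y => eps x *: y) (cop h) = h.
Hypothesis counitr : forall h, tev CC (fun x y => eps y *: x) (cop h) = h.

Local Notation D2 h f := (tev CC f (cop h)).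

Lemma tev_counitl (W : lmodType K) (g : C -> W) h : lin g ->
  D2 h (fun x y => eps x *: g y) = g h.
Proof.
move=> Lg; rewrite -{2}(counitl h) (tev_comp (L := g)) //; try multilin_tac.
by apply: tev_ext => x y; rewrite linZ.
Qed.

Lemma tev_counitr (W : lmodType K) (g : C -> W) h : lin g ->
  D2 h (fun x y => eps y *: g x) = g h.
Proof.
move=> Lg; rewrite -{2}(counitr h) (tev_comp (L := g)) //; try multilin_tac.
by apply: tev_ext => x y; rewrite linZ.
Qed.

(* Bracketings of the threefold coproduct: the left-hand side always splits
   h, then its first leg, then the first leg of that; the suffix of [cop3_*]
   records which legs the right-hand side splits instead. *)
Section ThreefoldCoproduct.
Variables (W : lmodType K) (f : C -> C -> C -> C -> W).
Hypothesis f_lin : quadrilin f.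

Lemma cop3_lr h :
  D2 h (fun x y => D2 x (fun p q => D2 p (fun u v => f u v q y))) =
  D2 h (fun x y => D2 x (fun p q => D2 q (fun u v => f p u v y))).
Proof.
case: f_lin => f1 f2 f3 f4.
apply: tev_ext => x y; apply: (coassoc (f := fun u v q => f u v q y)); multilin_tac.
Qed.

Lemma cop3_both_rl h :
  D2 h (fun x y => D2 x (fun p q => D2 p (fun u v => f u v q y))) =
  D2 h (fun x y => D2 y (fun c d => D2 x (fun a b => f a b c d))).
Proof.
case: f_lin => f1 f2 f3 f4.
apply: (coassoc (f := fun p q y => D2 p (fun u v => f u v q y))); multilin_tac.
Qed.

Lemma cop3_both h :
  D2 h (fun x y => D2 x (fun p q => D2 p (fun u v => f u v q y))) =
  D2 h (fun x y => D2 x (fun a b => D2 y (fun c d => f a b c d))).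
Proof.
rewrite cop3_both_rl; case: f_lin => f1 f2 f3 f4.
apply: tev_ext => x y; apply: tev_swap; multilin_tac.
Qed.

Lemma cop3_rr h :
  D2 h (fun x y => D2 x (fun p q => D2 p (fun u v => f u v q y))) =
  D2 h (fun x y => D2 y (fun p q => D2 q (fun u v => f x p u v))).
Proof.
case: f_lin => f1 f2 f3 f4.
rewrite cop3_both; apply: (coassoc (f := fun x p q => D2 q (fun u v => f x p u v))).
multilin_tac.
Qed.

End ThreefoldCoproduct.
End Coalgebra.

Section HopfQuasigroupTheory.
Variable K : fieldType.
Variables (H : lmodType K) (HH : tensor H H).
Variables (mul : H -> H -> H) (one : H) (cop : H -> tT HH) (eps : H -> K) (S : H -> H).
Hypothesis hq : hopf_quasigroup mul one cop eps S.

Local Notation D2 h f := (tev HH f (cop h)).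

Let mul_linl : forall y, lin (fun x => mul x y). Proof. exact: (hq_mul_bilin hq).1. Qed.
Let mul_linr : forall x, lin (mul x). Proof. exact: (hq_mul_bilin hq).2. Qed.
Let cop_lin : lin cop. Proof. exact: hq_cop_lin hq. Qed.
Let eps_lin : linK eps. Proof. exact: hq_eps_lin hq. Qed.
Let S_lin : lin S. Proof. exact: hq_S_lin hq. Qed.
Let coassoc := hq_coassoc hq.
Let counitl := tev_counitl eps_lin (hq_counitl hq).
Let counitr := tev_counitr eps_lin (hq_counitr hq).

Lemma mul_antipode_cop h : D2 h (fun x y => mul (S x) y) = eps h *: one.
Proof. rewrite -(hq_S1 hq one h); apply: tev_ext => x y; by rewrite (hq_unitr hq). Qed.

Lemma mul_cop_antipode h : D2 h (fun x y => mul x (S y)) = eps h *: one.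
Proof. rewrite -(hq_S3 hq one h); apply: tev_ext => x y; by rewrite (hq_unitl hq). Qed.

Lemma eps_cop h : D2 h (fun x y => (eps x * eps y : K^o)) = eps h.
Proof.
rewrite -{2}(hq_counitl hq h) (tev_comp (L := (eps : H -> K^o))); try by multilin_tac.
by apply: tev_ext => x y; rewrite (linZ _ _ (linK_lin eps_lin)).
Qed.

Lemma tensor_mul_cop_antipode (t : tT HH) k :
  eps k *: t = D2 k (fun k' r => D2 r (fun k3 k4 =>
     tev HH (fun p q => tm HH (mul p (S k4)) (mul q (S k3)))
       (tev HH (fun x' y' => tev HH (fun u v => tm HH (mul x' u) (mul y' v)) (cop k')) t))).
Proof.
move: t; apply: tensor_ext; [exact: lin_scale | lin_tac | move=> a b].
under tev_ext => k' r do under tev_ext => k3 k4 do rewrite_tev_tm.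
under tev_ext => k' r do under tev_ext => k3 k4 do
  (rewrite_tev_tev; under tev_ext => u v do rewrite_tev_tm).
rewrite -(cop3_both_rl cop_lin coassoc
  (f := fun u v k3 k4 => tm HH (mul (mul a u) (S k4)) (mul (mul b v) (S k3))));
  last by multilin_tac.
rewrite cop3_lr //; last by multilin_tac.
under tev_ext => x y do under tev_ext => p q do
  (rewrite (tev_pull (L := tm HH (mul (mul a p) (S y))) (b := fun v k3 => mul (mul b v) (S k3)));
     [|by multilin_tac|by multilin_tac];
   rewrite (hq_S3 hq)).
under tev_ext => x y do
  (under tev_ext => p q do rewrite (linZ _ _ (tm_linr _ _));
   rewrite (counitr (g := fun p => tm HH (mul (mul a p) (S y)) b)); last by lin_tac).
rewrite (tev_pull (L := fun z => tm HH z b) (b := fun x y => mul (mul a x) (S y)));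
  [|by multilin_tac|by multilin_tac].
by rewrite (hq_S3 hq) (linZ _ _ (tm_linl _ _)).
Qed.

(* cop (S h) = cop (S h_(1)) cop (h_(2)) (S h_(4) (x) S h_(3))
          = cop (S h_(1) h_(2)) (S h_(4) (x) S h_(3)), and S h_(1) h_(2) = eps(h) 1. *)
Lemma cop_antipode h : cop (S h) = D2 h (fun x y => tm HH (S y) (S x)).
Proof.
rewrite -(counitr (g := fun x => cop (S x)) h); last by lin_tac.
under tev_ext => x y do rewrite tensor_mul_cop_antipode.
under tev_ext => x y do under tev_ext => k' r do under tev_ext => k3 k4 do
  rewrite -(hq_cop_mul hq).
rewrite -(cop3_rr cop_lin coassoc (f := fun x k' k3 k4 =>
  D2 (mul (S x) k') (fun p q : H => tm HH (mul p (S k4)) (mul q (S k3)))));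
  last by multilin_tac.
under tev_ext => x y do under tev_ext => p q do
  (rewrite (tev_pull (L := fun z => D2 z (fun p0 q0 : H => tm HH (mul p0 (S y)) (mul q0 (S q))))
                     (b := fun u v => mul (S u) v)); [|by multilin_tac|by multilin_tac];
   rewrite mul_antipode_cop
     (linZ _ _ (_ : lin (fun z => D2 z (fun p0 q0 : H => tm HH (mul p0 (S y)) (mul q0 (S q))))));
   last by lin_tac).
apply: tev_ext => x y.
rewrite (counitl (g := fun q => D2 one (fun p0 q0 : H => tm HH (mul p0 (S y)) (mul q0 (S q)))));
  last by lin_tac.
by rewrite (hq_cop_one hq) tev_tm ?(hq_unitl hq) //; multilin_tac.
Qed.

Lemma eps_antipode h : eps (S h) = eps h.
Proof.
have -> : eps h = eps (eps h *: one).
  by rewrite (linZ _ _ (linK_lin eps_lin)) (hq_eps_one hq) /GRing.scale /= mulr1.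
rewrite -mul_antipode_cop (tev_comp (L := (eps : H -> K^o))); try by multilin_tac.
under tev_ext => x y do rewrite (hq_eps_mul hq) mulrC.
by rewrite -[LHS](counitr (g := fun x => (eps (S x) : K^o))) //; lin_tac.
Qed.

Lemma tev_cop_mul_antipode (W : lmodType K) (Phi : H -> H -> W) g m : bilin Phi ->
  D2 (mul g (S m)) Phi =
  D2 m (fun k1 k2 => D2 g (fun g1 x => Phi (mul g1 (S k2)) (mul x (S k1)))).
Proof.
case=> P1 P2; rewrite (hq_cop_mul hq) tev_tev; try by multilin_tac.
under tev_ext => g1 x do
  (rewrite cop_antipode; rewrite_tev_tev; rewrite_tev_tev;
   under tev_ext => k1 k2 do (rewrite_tev_tm; rewrite_tev_tm)).
by rewrite tev_swap //; multilin_tac.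
Qed.

End HopfQuasigroupTheory.

Section SmashProduct.
Variable K : fieldType.
Variables (H A : lmodType K)
  (HH : tensor H H) (AA : tensor A A) (HA : tensor H A) (AH : tensor A H)
  (XX : tensor (tT AH) (tT AH))
  (mulH : H -> H -> H) (oneH : H) (copH : H -> tT HH) (epsH : H -> K) (SH : H -> H)
  (mulA : A -> A -> A) (oneA : A) (copA : A -> tT AA) (epsA : A -> K) (SA : A -> A)
  (act : H -> A -> A).
Hypothesis hH : hopf_quasigroup mulH oneH copH epsH SH.
Hypothesis hA : hopf_quasigroup mulA oneA copA epsA SA.
Hypothesis qm : quasimodule_hopf_quasigroup oneH copH epsH SH mulA oneA copA epsA act.

Let mulH_linl : forall y, lin (fun x => mulH x y). Proof. exact: (hq_mul_bilin hH).1. Qed.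
Let mulH_linr : forall x, lin (mulH x). Proof. exact: (hq_mul_bilin hH).2. Qed.
Let copH_lin : lin copH. Proof. exact: hq_cop_lin hH. Qed.
Let epsH_lin : linK epsH. Proof. exact: hq_eps_lin hH. Qed.
Let SH_lin : lin SH. Proof. exact: hq_S_lin hH. Qed.
Let mulA_linl : forall y, lin (fun x => mulA x y). Proof. exact: (hq_mul_bilin hA).1. Qed.
Let mulA_linr : forall x, lin (mulA x). Proof. exact: (hq_mul_bilin hA).2. Qed.
Let copA_lin : lin copA. Proof. exact: hq_cop_lin hA. Qed.
Let epsA_lin : linK epsA. Proof. exact: hq_eps_lin hA. Qed.
Let SA_lin : lin SA. Proof. exact: hq_S_lin hA. Qed.
Let act_linl : forall a, lin (fun h => act h a). Proof. exact: (qm_bilin qm).1. Qed.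
Let act_linr : forall h, lin (act h). Proof. exact: (qm_bilin qm).2. Qed.

Let coassocH := hq_coassoc hH.
Let coassocA := hq_coassoc hA.
Let counitlH := tev_counitl epsH_lin (hq_counitl hH).
Let counitrH := tev_counitr epsH_lin (hq_counitr hH).
Let counitlA := tev_counitl epsA_lin (hq_counitl hA).
Let counitrA := tev_counitr epsA_lin (hq_counitr hA).
Let cop3_lrH := cop3_lr coassocH.
Let cop3_bothH := cop3_both copH_lin coassocH.
Let cop3_both_rlH := cop3_both_rl copH_lin coassocH.

(* Both sides equal  sum S_A(c_(1)) (c_(2) (h_(2).S_A a_(2)))  with c = h_(1).a_(1):
   by the antipode axiom of A this is h.S_A a, and by multiplicativity of the
   action (then a_(2) S_A a_(3) = eps(a_(2)) 1) it is S_A(h.a). *)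
Lemma act_antipode h a : act h (SA a) = SA (act h a).
Proof.
pose P := tev HH (fun h1 h2 => tev AA (fun a1 a2 =>
  tev AA (fun c1 c2 => mulA (SA c1) (mulA c2 (act h2 (SA a2)))) (copA (act h1 a1))) (copA a))
  (copH h).
have P_act : P = act h (SA a).
  rewrite /P; under tev_ext => h' h3 do
    (under tev_ext => a' a3 do rewrite (hq_S1 hA) (qm_eps qm) -scalerA;
     pull (fun z : A => epsH h' *: z) (fun a' a3 => epsA a' *: act h3 (SA a3));
     rewrite (counitlA (g := fun a3 => act h3 (SA a3))); [|by lin_tac]).
  by rewrite (counitlH (g := fun h3 => act h3 (SA a))) //; lin_tac.
have P_S : P = SA (act h a).
  rewrite /P; under tev_ext => h' h3 do
    (under tev_ext => a' a3 do
       (rewrite (qm_cop qm); rewrite_tev_tev;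
        under tev_ext => p q do (rewrite_tev_tev; under tev_ext => u v do rewrite_tev_tm));
     rewrite tev_swap; [|by multilin_tac];
     under tev_ext => p q do (rewrite coassocA; [|by multilin_tac])).
  rewrite coassocH; last by multilin_tac.
  under tev_ext => p m do
    (rewrite tev_swap; [|by multilin_tac];
     under tev_ext => u n do
       (rewrite tev_swap; [|by multilin_tac];
        under tev_ext => v a3 do
          (pull (mulA (SA (act p u))) (fun q h3 => mulA (act q v) (act h3 (SA a3)));
           rewrite (qm_mul qm));
        pull (fun z => mulA (SA (act p u)) (act m z)) (fun v a3 => mulA v (SA a3));
        rewrite (mul_cop_antipode hA) (linZ _ _ (act_linr _)) (qm_unit qm) scalerA
                (linZ _ _ (mulA_linr _)) (hq_unitr hA) -scalerA);
     rewrite (counitrA (g := fun u => epsH m *: SA (act p u))); [|by lin_tac]).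
  by rewrite (counitrH (g := fun p => SA (act p a))) //; lin_tac.
by rewrite -P_act.
Qed.

Lemma hq_S3_act b g a :
  tev AA (fun a1 a2 => tev HH (fun g1 u => mulA (mulA b (act g1 a1)) (SA (act u a2))) (copH g))
    (copA a)
  = epsA (act g a) *: b.
Proof.
rewrite -(hq_S3 hA) (qm_cop qm) tev_tev; try by multilin_tac.
under [RHS]tev_ext => p q do (rewrite_tev_tev; under tev_ext => u v do rewrite_tev_tm).
by rewrite tev_swap //; multilin_tac.
Qed.

Lemma hq_S4_act b m a :
  tev HH (fun m1 m2 => tev AA (fun a1 a2 => mulA (mulA b (SA (act m1 a1))) (act m2 a2)) (copA a))
    (copH m)
  = epsA (act m a) *: b.
Proof.
rewrite -(hq_S4 hA) (qm_cop qm) tev_tev; try by multilin_tac.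
by under [RHS]tev_ext => p q do (rewrite_tev_tev; under tev_ext => u v do rewrite_tev_tm).
Qed.

Lemma act_antipode_mul y x z :
  tev HH (fun s q => mulA (act (SH q) x) (act (SH s) z)) (copH y) = act (SH y) (mulA x z).
Proof.
rewrite -(qm_mul qm) (cop_antipode hH) tev_tev; try by multilin_tac.
by apply: tev_ext => p q; rewrite tev_tm //; multilin_tac.
Qed.

Local Notation R := (@Rmap K H A HH HA AH copH act).

Lemma Rmap_tm h a : R (tm HA h a) = tev HH (fun x y => tm AH (act x a) y) (copH h).
Proof. by rewrite /Rmap tev_tm //; multilin_tac. Qed.

Lemma Rmap_normal : R_normal oneH oneA R.
Proof.
split=> [h|a]; rewrite Rmap_tm.
- under tev_ext => x y do rewrite (qm_unit qm) (linZ _ _ (tm_linl AH y)).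
  by rewrite counitlH //; lin_tac.
- by rewrite (hq_cop_one hH) tev_tm ?(qm_one qm) //; multilin_tac.
Qed.

Lemma Rmap_left_conormal : R_left_conormal epsA R.
Proof.
move=> h a; rewrite Rmap_tm tev_tev; try by multilin_tac.
under tev_ext => x y do (rewrite tev_tm; [rewrite (qm_eps qm) mulrC -scalerA|by multilin_tac]).
pull (fun z : H => epsA a *: z) (fun x y : H => epsH x *: y).
by rewrite (hq_counitl hH).
Qed.

Lemma Rmap_left_multiplicative : R_left_multiplicative mulA R.
Proof.
move=> h a b; rewrite !Rmap_tm tev_tev; try by multilin_tac.
under [RHS]tev_ext => x y do
  (rewrite_tev_tm; rewrite Rmap_tm; rewrite_tev_tev; under tev_ext => p q do rewrite_tev_tm).
rewrite -coassocH; last by multilin_tac.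
apply: tev_ext => x y.
pull (fun z => tm AH z y) (fun u v => mulA (act u a) (act v b)).
by rewrite (qm_mul qm).
Qed.

Local Notation sm := (@smash_mul K H A HH AH mulH copH mulA act).
Local Notation sone := (@smash_one K H A AH oneH oneA).
Local Notation scop := (@smash_cop K H A HH AA AH copH copA XX).
Local Notation seps := (@smash_eps K H A AH epsH epsA).
Local Notation sS := (@smash_S K H A HH HA AH copH SH SA act).

Let smash_mul_linl : forall t, lin (fun s => sm s t).
Proof. move=> t; rewrite /smash_mul; lin_tac. Qed.
Let smash_mul_linr : forall s, lin (sm s).
Proof. move=> s; rewrite /smash_mul; lin_tac. Qed.
Let smash_cop_lin : lin scop.
Proof. rewrite /smash_cop; lin_tac. Qed.
Let smash_eps_lin : linK seps.
Proof.
suff L : lin (seps : tT AH -> K^o) by [].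
by rewrite /smash_eps; apply: tev_lin; multilin_tac.
Qed.
Let smash_S_lin : lin sS.
Proof. rewrite /smash_S /Rmap; lin_tac. Qed.

Lemma smash_mul_tm a h b g : sm (tm AH a h) (tm AH b g) =
  tev HH (fun h1 h2 => tm AH (mulA a (act h1 b)) (mulH h2 g)) (copH h).
Proof. by rewrite /smash_mul !tev_tm //; multilin_tac. Qed.

Lemma smash_cop_tm a h : scop (tm AH a h) =
  tev AA (fun a1 a2 => tev HH (fun h1 h2 => tm XX (tm AH a1 h1) (tm AH a2 h2)) (copH h)) (copA a).
Proof. by rewrite /smash_cop !tev_tm //; multilin_tac. Qed.

Lemma smash_eps_tm a h : seps (tm AH a h) = epsA a * epsH h.
Proof. by rewrite /smash_eps !tev_tm //; multilin_tac. Qed.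

Lemma smash_S_tm a h : sS (tm AH a h) =
  tev HH (fun p q => tm AH (act (SH q) (SA a)) (SH p)) (copH h).
Proof.
rewrite /smash_S tev_tm; last by rewrite -/R; multilin_tac.
rewrite Rmap_tm (cop_antipode hH) tev_tev; try by multilin_tac.
by apply: tev_ext => p q; rewrite tev_tm //; multilin_tac.
Qed.

Lemma smash_unitl t : sm sone t = t.
Proof.
move: t; apply: tensor_ext; [by lin_tac | exact: lin_id | move=> b g].
rewrite /smash_one smash_mul_tm (hq_cop_one hH) tev_tm; last by multilin_tac.
by rewrite (qm_one qm) (hq_unitl hA) (hq_unitl hH).
Qed.

Lemma smash_unitr t : sm t sone = t.
Proof.
move: t; apply: tensor_ext; [by lin_tac | exact: lin_id | move=> a h].
rewrite /smash_one smash_mul_tm.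
under tev_ext => x y do
  rewrite (qm_unit qm) (linZ _ _ (mulA_linr a)) (hq_unitr hA) (hq_unitr hH)
          (linZ _ _ (tm_linl _ _)).
by rewrite counitlH //; lin_tac.
Qed.

Lemma tev_smash_cop_tm (W : lmodType K) (F : tT AH -> tT AH -> W) a h : bilin F ->
  tev XX F (scop (tm AH a h)) =
  tev AA (fun a1 a2 => tev HH (fun h1 h2 => F (tm AH a1 h1) (tm AH a2 h2)) (copH h)) (copA a).
Proof.
case=> F1 F2; rewrite smash_cop_tm tev_tev; try by multilin_tac.
apply: tev_ext => a1 a2; rewrite tev_tev; try by multilin_tac.
by apply: tev_ext => h1 h2; rewrite tev_tm //; multilin_tac.
Qed.

Lemma smash_counitl t : tev XX (fun x y => seps x *: y) (scop t) = t.
Proof.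
move: t; apply: tensor_ext; [by lin_tac | exact: lin_id | move=> a h].
rewrite tev_smash_cop_tm; last by multilin_tac.
under tev_ext => a1 a2 do (under tev_ext => h1 h2 do rewrite smash_eps_tm -scalerA;
   pull (fun z : tT AH => epsA a1 *: z) (fun h1 h2 => epsH h1 *: tm AH a2 h2);
   rewrite counitlH; [|by lin_tac]).
by rewrite (counitlA (g := fun a2 => tm AH a2 h)) //; lin_tac.
Qed.

Lemma smash_counitr t : tev XX (fun x y => seps y *: x) (scop t) = t.
Proof.
move: t; apply: tensor_ext; [by lin_tac | exact: lin_id | move=> a h].
rewrite tev_smash_cop_tm; last by multilin_tac.
under tev_ext => a1 a2 do (under tev_ext => h1 h2 do rewrite smash_eps_tm -scalerA;
   pull (fun z : tT AH => epsA a2 *: z) (fun h1 h2 => epsH h2 *: tm AH a1 h1);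
   rewrite counitrH; [|by lin_tac]).
by rewrite (counitrA (g := fun a1 => tm AH a1 h)) //; lin_tac.
Qed.

Lemma smash_cop_one : scop sone = tm XX sone sone.
Proof.
by rewrite /smash_one smash_cop_tm (hq_cop_one hA) tev_tm ?(hq_cop_one hH) ?tev_tm //; multilin_tac.
Qed.

Lemma smash_eps_one : seps sone = 1.
Proof. by rewrite /smash_one smash_eps_tm (hq_eps_one hA) (hq_eps_one hH) mulr1. Qed.

Lemma smash_eps_mul s t : seps (sm s t) = seps s * seps t.
Proof.
move: s; apply: (tensor_ext (W := K^o) (F := fun s => seps (sm s t))
                            (G := fun s => seps s * seps t)).
- by lin_tac.
- by lin_tac.
move=> a h; move: t.
apply: (tensor_ext (W := K^o) (F := fun t => seps (sm (tm AH a h) t))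
                   (G := fun t => seps (tm AH a h) * seps t)).
- by lin_tac.
- by lin_tac.
move=> b g; rewrite smash_mul_tm.
rewrite (tev_comp (L := (seps : tT AH -> K^o))); try by multilin_tac.
under tev_ext => x y do rewrite smash_eps_tm (hq_eps_mul hA) (hq_eps_mul hH) (qm_eps qm)
   (mulrCA (epsA a)) mulrACA mulrC.
pull (fun z : K^o => (epsA a * epsA b * epsH g) *: z) (fun x y => (epsH x * epsH y : K^o)).
by rewrite (eps_cop hH) !smash_eps_tm /GRing.scale /= [RHS]mulrAC mulrA.
Qed.

Lemma smash_coassoc (W : lmodType K) (f : tT AH -> tT AH -> tT AH -> W) : trilin f ->
  forall t,
      tev XX (fun x y => tev XX (fun u v => f u v y) (scop x)) (scop t)
    = tev XX (fun x y => tev XX (fun u v => f x u v) (scop y)) (scop t).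
Proof.
case=> f1 f2 f3; apply: tensor_ext; [by lin_tac | by lin_tac | move=> a h].
rewrite !tev_smash_cop_tm; try by multilin_tac.
under tev_ext => a1 a2 do
  (under tev_ext => h1 h2 do (rewrite tev_smash_cop_tm; [|by multilin_tac]);
   rewrite tev_swap; [|by multilin_tac];
   under tev_ext => u v do (rewrite coassocH; [|by multilin_tac])).
under [RHS]tev_ext => a1 a2 do
  (under tev_ext => h1 h2 do (rewrite tev_smash_cop_tm; [|by multilin_tac]);
   rewrite tev_swap; [|by multilin_tac]).
by rewrite coassocA //; multilin_tac.
Qed.

Lemma smash_mul_tevl (X : tT AH) (T : tensor H H) (F : H -> H -> tT AH) t : bilin F ->
  sm (tev T F t) X = tev T (fun p q => sm (F p q) X) t.
Proof. move=> BF; rewrite (tev_comp (L := fun z => sm z X)) //; multilin_tac. Qed.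

Lemma smash_mul_tevr (X : tT AH) (T : tensor H H) (F : H -> H -> tT AH) t : bilin F ->
  sm X (tev T F t) = tev T (fun p q => sm X (F p q)) t.
Proof. move=> BF; rewrite (tev_comp (L := sm X)) //; multilin_tac. Qed.

Lemma smash_S1 g h : tev XX (fun x y => sm (sS x) (sm y g)) (scop h) = seps h *: g.
Proof.
move: h; apply: tensor_ext; [by lin_tac | by lin_tac | move=> a h].
move: g; apply: tensor_ext; [by lin_tac | by lin_tac | move=> b g].
rewrite tev_smash_cop_tm; last by multilin_tac.
under tev_ext => a1 a2 do
  (under tev_ext => h1 h2 do
     (rewrite smash_mul_tm smash_S_tm smash_mul_tevl; [|by multilin_tac];
      under tev_ext => p q do
        (rewrite smash_mul_tevr; [|by multilin_tac];
         under tev_ext => k1 k2 do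
           (rewrite smash_mul_tm (cop_antipode hH); rewrite_tev_tev;
            under tev_ext => r s do rewrite_tev_tm);
         rewrite tev_swap; [|by multilin_tac]);
      rewrite coassocH; [|by multilin_tac];
      under tev_ext => r y do
        (rewrite tev_swap; [|by multilin_tac];
         under tev_ext => k1 k2 do
           (pull (fun z => tm AH z (mulH (SH r) (mulH k2 g)))
                 (fun s q => mulA (act (SH q) (SA a1)) (act (SH s) (mulA a2 (act k1 b))));
            rewrite act_antipode_mul)))).
rewrite tev_swap; last by multilin_tac.
under tev_ext => h1 h2 do
  (rewrite tev_swap; [|by multilin_tac];
   under tev_ext => r y do
     (rewrite tev_swap; [|by multilin_tac];
      under tev_ext => k1 k2 do
        (pull (fun z => tm AH (act (SH y) z) (mulH (SH r) (mulH k2 g)))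
              (fun a1 a2 => mulA (SA a1) (mulA a2 (act k1 b)));
         rewrite (hq_S1 hA) (linZ _ _ (act_linr _)) (linZ _ _ (tm_linl _ _)));
      pull (fun z : tT AH => epsA a *: z)
           (fun k1 k2 => tm AH (act (SH y) (act k1 b)) (mulH (SH r) (mulH k2 g))));
   pull (fun z : tT AH => epsA a *: z)
        (fun r y => tev HH (fun k1 k2 =>
           tm AH (act (SH y) (act k1 b)) (mulH (SH r) (mulH k2 g))) (copH h2))).
pull (fun z : tT AH => epsA a *: z)
     (fun h1 h2 => tev HH (fun r y => tev HH (fun k1 k2 =>
        tm AH (act (SH y) (act k1 b)) (mulH (SH r) (mulH k2 g))) (copH h2)) (copH h1)).
rewrite -cop3_bothH; last by multilin_tac.
rewrite cop3_lrH; last by multilin_tac.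
under tev_ext => x y do
  (under tev_ext => p m do
     (pull (fun z => tm AH z (mulH (SH p) (mulH y g))) (fun q r => act (SH q) (act r b));
      rewrite (qm_S2 qm) (linZ _ _ (tm_linl _ _)));
   rewrite (counitrH (g := fun p => tm AH b (mulH (SH p) (mulH y g)))); [|by lin_tac]).
pull (tm AH b) (fun x y => mulH (SH x) (mulH y g)).
by rewrite (hq_S1 hH) (linZ _ _ (tm_linr _ _)) smash_eps_tm scalerA.
Qed.

Lemma smash_S2 g h : tev XX (fun x y => sm x (sm (sS y) g)) (scop h) = seps h *: g.
Proof.
move: h; apply: tensor_ext; [by lin_tac | by lin_tac | move=> a h].
move: g; apply: tensor_ext; [by lin_tac | by lin_tac | move=> b g].
rewrite tev_smash_cop_tm; last by multilin_tac.
under tev_ext => a1 a2 do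
  (under tev_ext => h1 h2 do
     (rewrite smash_S_tm smash_mul_tevl; [|by multilin_tac];
      under tev_ext => p q do
        (rewrite smash_mul_tm (cop_antipode hH); rewrite_tev_tev;
         under tev_ext => r s do rewrite_tev_tm);
      rewrite smash_mul_tevr; [|by multilin_tac];
      under tev_ext => p q do
        (rewrite smash_mul_tevr; [|by multilin_tac];
         under tev_ext => r s do rewrite smash_mul_tm);
      rewrite coassocH; [|by multilin_tac];
      under tev_ext => r y do
        (rewrite tev_swap; [|by multilin_tac];
         under tev_ext => k1 k2 do
           (pull (fun z => tm AH (mulA a1 (act k1 z)) (mulH k2 (mulH (SH r) g)))
                 (fun s q => mulA (act (SH q) (SA a2)) (act (SH s) b));
            rewrite act_antipode_mul)))).
rewrite tev_swap; last by multilin_tac.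
under tev_ext => h1 h2 do
  (rewrite tev_swap; [|by multilin_tac];
   under tev_ext => r y do (rewrite tev_swap; [|by multilin_tac])).
rewrite -cop3_both_rlH; last by multilin_tac.
rewrite cop3_lrH; last by multilin_tac.
under tev_ext => x y do
  (under tev_ext => p m do
     (rewrite tev_swap; [|by multilin_tac];
      under tev_ext => a1 a2 do
        (pull (tm AH (mulA a1 (act p (act (SH y) (mulA (SA a2) b)))))
              (fun q r => mulH q (mulH (SH r) g));
         rewrite (hq_S2 hH) (linZ _ _ (tm_linr _ _)));
      pull (fun z : tT AH => epsH m *: z)
           (fun a1 a2 => tm AH (mulA a1 (act p (act (SH y) (mulA (SA a2) b)))) g));
   rewrite (counitrH (g := fun p => tev AA (fun a1 a2 =>
     tm AH (mulA a1 (act p (act (SH y) (mulA (SA a2) b)))) g) (copA a))); [|by lin_tac]).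
rewrite tev_swap; last by multilin_tac.
under tev_ext => a1 a2 do
  (pull (fun z => tm AH (mulA a1 z) g) (fun x y => act x (act (SH y) (mulA (SA a2) b)));
   rewrite (qm_S1 qm) (linZ _ _ (mulA_linr _)) (linZ _ _ (tm_linl _ _))).
pull (fun z : tT AH => epsH h *: z) (fun a1 a2 => tm AH (mulA a1 (mulA (SA a2) b)) g).
pull (fun z => tm AH z g) (fun a1 a2 => mulA a1 (mulA (SA a2) b)).
by rewrite (hq_S2 hA) (linZ _ _ (tm_linl _ _)) smash_eps_tm scalerA mulrC.
Qed.

Section CocommutingAction.
Hypothesis act_cop_swap : forall (h : H) (a : A),
  tev HH (fun x y => tm HA x (act y a)) (copH h) = tev HH (fun x y => tm HA y (act x a)) (copH h).
Hypothesis act_mul_antipode : forall (g h : H) (a : A),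
  act g (act (SH h) a) = act (mulH g (SH h)) a.

Lemma act_cop_swap_gen (W : lmodType K) (Phi : H -> A -> W) m v : bilin Phi ->
  tev HH (fun q r => Phi q (act r v)) (copH m) = tev HH (fun q r => Phi r (act q v)) (copH m).
Proof.
move=> [P1 P2].
have E := f_equal (tev HA Phi) (act_cop_swap m v).
rewrite !tev_tev in E; try by multilin_tac.
transitivity (tev HH (fun x y => tev HA Phi (tm HA x (act y v))) (copH m)).
  by apply: tev_ext => x y; rewrite tev_tm //; multilin_tac.
rewrite E; apply: tev_ext => x y; rewrite tev_tm //; multilin_tac.
Qed.

Lemma Rmap_coalgebra_map : R_coalgebra_map copH epsH copA epsA R.
Proof.
split; last first.
  move=> h a; rewrite Rmap_tm tev_tev; try by multilin_tac.
  under tev_ext => x y do (rewrite_tev_tm; rewrite (qm_eps qm) mulrAC mulrC).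
  pull (fun z : K^o => epsA a *: z) (fun x y => (epsH x * epsH y : K^o)).
  by rewrite (eps_cop hH) /= mulrC.
move=> W f [f1 f2 f3 f4] h a.
rewrite Rmap_tm tev_tev; try by multilin_tac.
under tev_ext => x y do
  (rewrite_tev_tm; rewrite (qm_cop qm) tev_tev; [|by multilin_tac|by multilin_tac];
   under tev_ext => p q do
     (rewrite_tev_tev; under tev_ext => u v do rewrite_tev_tm;
      rewrite tev_swap; [|by multilin_tac])).
under [RHS]tev_ext => h1 h2 do
  (under tev_ext => a1 a2 do
     (rewrite !Rmap_tm tev_tev; [|by multilin_tac|by multilin_tac];
      under tev_ext => k1 k2 do
        (rewrite_tev_tm; rewrite_tev_tev; under tev_ext => m1 m2 do rewrite_tev_tm));
   rewrite tev_swap; [|by multilin_tac];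
   under tev_ext => k1 k2 do (rewrite tev_swap; [|by multilin_tac])).
rewrite -[LHS]cop3_bothH; last by multilin_tac.
rewrite -[RHS]cop3_bothH; last by multilin_tac.
rewrite [LHS]cop3_lrH; last by multilin_tac.
rewrite [RHS]cop3_lrH; last by multilin_tac.
apply: tev_ext => x y; apply: tev_ext => p m.
rewrite tev_swap; last by multilin_tac.
rewrite [RHS]tev_swap; last by multilin_tac.
apply: tev_ext => u v.
by rewrite (act_cop_swap_gen (Phi := fun z c => f (act p u) z c y)) //; multilin_tac.
Qed.

Lemma Rmap_right_S_conormal : R_right_S_conormal epsH SH R.
Proof.
move=> h a; rewrite Rmap_tm tev_tev; try by multilin_tac.
under tev_ext => x y do
  (rewrite_tev_tm; rewrite Rmap_tm; rewrite_tev_tev; under tev_ext => p q do rewrite_tev_tm;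
   rewrite (counitrH (g := fun p => act p (act x a))); [|by lin_tac]).
rewrite -(act_cop_swap_gen (Phi := fun z c => act (SH z) c)); last by multilin_tac.
exact: (qm_S2 qm).
Qed.

Lemma Rmap_right_S_multiplicative : R_right_S_multiplicative mulH SH R.
Proof.
move=> g h a; rewrite !Rmap_tm (hq_cop_mul hH) !tev_tev; try by multilin_tac.
under tev_ext => x y do
  (rewrite_tev_tev;
   under tev_ext => u v do rewrite_tev_tm;
   rewrite (cop_antipode hH) tev_tev; [|by multilin_tac|by multilin_tac];
   under tev_ext => p q do rewrite_tev_tm).
rewrite [in RHS](cop_antipode hH) [RHS]tev_tev; try by multilin_tac.
under [RHS]tev_ext => p q do rewrite_tev_tm.
under [RHS]tev_ext => p q do
  (rewrite_tev_tm; rewrite Rmap_tm tev_tev; [|by multilin_tac|by multilin_tac];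
   under tev_ext => x y do (rewrite_tev_tm; rewrite act_mul_antipode)).
rewrite tev_swap //; multilin_tac.
Qed.

Lemma smash_cop_mul s t : scop (sm s t) =
    tev XX (fun x y => tev XX (fun u v => tm XX (sm x u) (sm y v)) (scop t)) (scop s).
Proof.
move: s; apply: tensor_ext; [by lin_tac | by lin_tac | move=> a h].
move: t; apply: tensor_ext; [by lin_tac | by lin_tac | move=> b g].
rewrite smash_mul_tm.
push scop (fun h1 h2 => tm AH (mulA a (act h1 b)) (mulH h2 g)).
under tev_ext => h1 h2 do
  (rewrite smash_cop_tm (hq_cop_mul hA) (hq_cop_mul hH) (qm_cop qm); rewrite_tev_tev;
   under tev_ext => x y do
     (rewrite_tev_tev; rewrite_tev_tev;
      under tev_ext => p q do
        (rewrite_tev_tev;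
         under tev_ext => u v do
           (rewrite_tev_tm; rewrite_tev_tm; rewrite_tev_tev;
            under tev_ext => x' y' do
              (rewrite_tev_tev; under tev_ext => u' v' do rewrite_tev_tm))))).
rewrite [LHS]tev_swap; last by multilin_tac.
under tev_ext => a1 a2 do
  (under tev_ext => h1 h2 do (rewrite tev_swap; [|by multilin_tac]);
   rewrite tev_swap; [|by multilin_tac]).
rewrite tev_smash_cop_tm; last by multilin_tac.
under [RHS]tev_ext => a1 a2 do
  (under tev_ext => h1 h2 do
     (rewrite tev_smash_cop_tm; [|by multilin_tac];
      under tev_ext => b1 b2 do
        (under tev_ext => g1 g2 do
           (rewrite [sm (tm AH a1 h1) _]smash_mul_tm;
            push (fun z => tm XX z (sm (tm AH a2 h2) (tm AH b2 g2)))
                 (fun p q => tm AH (mulA a1 (act p b1)) (mulH q g1));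
            under tev_ext => p q do
              (rewrite smash_mul_tm;
               push (fun z => tm XX (tm AH (mulA a1 (act p b1)) (mulH q g1)) z)
                    (fun r s => tm AH (mulA a2 (act r b2)) (mulH s g2))))));
   rewrite tev_swap; [|by multilin_tac]).
apply: tev_ext => a1 a2; apply: tev_ext => b1 b2.
under [RHS]tev_ext => x y do
  (rewrite tev_swap; [|by multilin_tac];
   under tev_ext => p q do (rewrite tev_swap; [|by multilin_tac])).
rewrite -[LHS]cop3_bothH; last by multilin_tac.
rewrite -[RHS]cop3_bothH; last by multilin_tac.
rewrite [LHS]cop3_lrH; last by multilin_tac.
rewrite [RHS]cop3_lrH; last by multilin_tac.
apply: tev_ext => x y; apply: tev_ext => p m.
by rewrite -(act_cop_swap_gen (Phi := fun z c => tev HH (fun u' v' =>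
  tm XX (tm AH (mulA a1 (act p b1)) (mulH z u')) (tm AH (mulA a2 c) (mulH y v'))) (copH g))) //;
  multilin_tac.
Qed.

Lemma smash_mul_S_tm b g a h :
  sm (tm AH b g) (sS (tm AH a h)) =
  tev HH (fun p q => tev HH (fun g1 g2 =>
    tm AH (mulA b (act (mulH g1 (SH q)) (SA a))) (mulH g2 (SH p))) (copH g)) (copH h).
Proof.
rewrite smash_S_tm smash_mul_tevr; last by multilin_tac.
apply: tev_ext => p q; rewrite smash_mul_tm.
by under tev_ext => g1 g2 do rewrite act_mul_antipode.
Qed.

Lemma smash_S3 g h : tev XX (fun x y => sm (sm g x) (sS y)) (scop h) = seps h *: g.
Proof.
move: h; apply: tensor_ext; [by lin_tac | by lin_tac | move=> a h].
move: g; apply: tensor_ext; [by lin_tac | by lin_tac | move=> b g].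
rewrite tev_smash_cop_tm; last by multilin_tac.
under tev_ext => a1 a2 do
  (under tev_ext => h1 h2 do
     (rewrite smash_mul_tm smash_mul_tevl; [|by multilin_tac];
      under tev_ext => g1 g2 do
        (rewrite smash_mul_S_tm (hq_cop_mul hH);
         under tev_ext => p q do
           (rewrite_tev_tev;
            under tev_ext => x y do (rewrite_tev_tev; under tev_ext => u v do rewrite_tev_tm));
         rewrite tev_swap; [|by multilin_tac]));
   rewrite tev_swap; [|by multilin_tac];
   under tev_ext => g1 g2 do (rewrite tev_swap; [|by multilin_tac])).
under tev_ext => a1 a2 do
  (under tev_ext => g1 g2 do
     (under tev_ext => u v do
        (rewrite -cop3_both_rlH; [|by multilin_tac]; rewrite cop3_lrH; [|by multilin_tac];
         under tev_ext => x' y' do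
           (under tev_ext => p m do
              (pull (tm AH (mulA (mulA b (act g1 a1)) (act (mulH (mulH u p) (SH y')) (SA a2))))
                    (fun q r => mulH (mulH v q) (SH r));
               rewrite (hq_S3 hH) (linZ _ _ (tm_linr _ _)));
            rewrite (counitrH (g := fun p =>
              tm AH (mulA (mulA b (act g1 a1)) (act (mulH (mulH u p) (SH y')) (SA a2))) v));
            [|by lin_tac]);
         pull (fun z => tm AH (mulA (mulA b (act g1 a1)) (act z (SA a2))) v)
              (fun x' y' => mulH (mulH u x') (SH y'));
         rewrite (hq_S3 hH) (linZ _ _ (act_linl _)) (linZ _ _ (mulA_linr _))
                 (linZ _ _ (tm_linl _ _)));
      pull (fun z : tT AH => epsH h *: z)
           (fun u v => tm AH (mulA (mulA b (act g1 a1)) (act u (SA a2))) v));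
   pull (fun z : tT AH => epsH h *: z)
        (fun g1 g2 =>
           tev HH (fun u v => tm AH (mulA (mulA b (act g1 a1)) (act u (SA a2))) v) (copH g2))).
pull (fun z : tT AH => epsH h *: z)
     (fun a1 a2 => tev HH (fun g1 g2 => tev HH (fun u v =>
        tm AH (mulA (mulA b (act g1 a1)) (act u (SA a2))) v) (copH g2)) (copH g)).
under tev_ext => a1 a2 do (rewrite -coassocH; [|by multilin_tac]).
rewrite tev_swap; last by multilin_tac.
under tev_ext => g' y do
  (under tev_ext => a1 a2 do
     (under tev_ext => g1 u do rewrite act_antipode;
      pull (fun z => tm AH z y) (fun g1 u => mulA (mulA b (act g1 a1)) (SA (act u a2))));
   pull (fun z => tm AH z y)
        (fun a1 a2 => tev HH (fun g1 u => mulA (mulA b (act g1 a1)) (SA (act u a2))) (copH g'));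
   rewrite hq_S3_act (qm_eps qm) mulrC -scalerA (linZ _ _ (tm_linl _ _))).
pull (fun z : tT AH => epsA a *: z) (fun g' y => epsH g' *: tm AH b y);
  last by move=> ??; rewrite (linZ _ _ (tm_linl _ _)).
rewrite (counitlH (g := tm AH b)); last by lin_tac.
by rewrite smash_eps_tm !scalerA mulrC.
Qed.

Lemma smash_S4 g h : tev XX (fun x y => sm (sm g (sS x)) y) (scop h) = seps h *: g.
Proof.
move: h; apply: tensor_ext; [by lin_tac | by lin_tac | move=> a h].
move: g; apply: tensor_ext; [by lin_tac | by lin_tac | move=> b g].
rewrite tev_smash_cop_tm; last by multilin_tac.
under tev_ext => a1 a2 do
  (under tev_ext => h1 h2 do
     (rewrite smash_mul_S_tm smash_mul_tevl; [|by multilin_tac];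
      under tev_ext => p q do
        (rewrite smash_mul_tevl; [|by multilin_tac];
         under tev_ext => g1 g2 do
           (rewrite smash_mul_tm (hq_cop_mul hH); rewrite_tev_tev;
            under tev_ext => x y do
              (rewrite (cop_antipode hH); rewrite_tev_tev; rewrite_tev_tev;
               under tev_ext => u v do (rewrite_tev_tm; rewrite_tev_tm)));
         under tev_ext => g1 g2 do (rewrite tev_swap; [|by multilin_tac]);
         rewrite tev_swap; [|by multilin_tac];
         under tev_ext => u v do (rewrite -coassocH; [|by multilin_tac])));
   rewrite cop3_lrH; [|by multilin_tac];
   under tev_ext => x y do (under tev_ext => p q do (rewrite tev_swap; [|by multilin_tac]))).
rewrite tev_swap; last by multilin_tac.
under tev_ext => x y do
  (rewrite tev_swap; [|by multilin_tac];
   under tev_ext => p q do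
     (rewrite tev_swap; [|by multilin_tac];
      under tev_ext => x0 y0 do
        (rewrite tev_swap; [|by multilin_tac];
         under tev_ext => u v do
           (rewrite tev_swap; [|by multilin_tac];
            under tev_ext => u0 v0 do
              (pull (fun z => tm AH z (mulH (mulH y0 (SH p)) y))
                    (fun a1 a2 => mulA (mulA b (act (mulH u0 (SH v)) (SA a1)))
                                       (act (mulH v0 (SH u)) a2)));
            pull (fun z => tm AH z (mulH (mulH y0 (SH p)) y))
                 (fun u0 v0 => tev AA (fun a1 a2 => mulA (mulA b (act (mulH u0 (SH v)) (SA a1)))
                                                         (act (mulH v0 (SH u)) a2)) (copA a)));
         pull (fun z => tm AH z (mulH (mulH y0 (SH p)) y))
              (fun u v => tev HH (fun u0 v0 => tev AA (fun a1 a2 =>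
                 mulA (mulA b (act (mulH u0 (SH v)) (SA a1))) (act (mulH v0 (SH u)) a2))
                 (copA a)) (copH x0));
         rewrite -(tev_cop_mul_antipode hH (Phi := fun m1 m2 =>
           tev AA (fun a1 a2 => mulA (mulA b (act m1 (SA a1))) (act m2 a2)) (copA a)));
         [|by multilin_tac];
         under tev_ext => m1 m2 do (under tev_ext => a1 a2 do rewrite act_antipode);
         rewrite hq_S4_act (qm_eps qm) (hq_eps_mul hH) (eps_antipode hH)
                 (linZ _ _ (tm_linl _ _)) (mulrC (epsH x0)) -mulrA -!scalerA);
      pull (fun z : tT AH => epsH q *: z)
           (fun x0 y0 => epsH x0 *: (epsA a *: tm AH b (mulH (mulH y0 (SH p)) y))));
   rewrite (counitrH (g := fun p => tev HH (fun x0 y0 =>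
     epsH x0 *: (epsA a *: tm AH b (mulH (mulH y0 (SH p)) y))) (copH g))); [|by lin_tac];
   rewrite (counitlH (g := fun y0 => epsA a *: tm AH b (mulH (mulH y0 (SH x)) y)));
   [|by lin_tac]).
pull (fun z => epsA a *: tm AH b z) (fun x y => mulH (mulH g (SH x)) y).
by rewrite (hq_S4 hH) (linZ _ _ (tm_linr _ _)) smash_eps_tm !scalerA.
Qed.

Lemma smash_hopf_quasigroup : hopf_quasigroup sm sone scop seps sS.
Proof.
constructor.
- by split; [exact: smash_mul_linl | exact: smash_mul_linr].
- exact: smash_unitl.
- exact: smash_unitr.
- exact: smash_cop_lin.
- exact: smash_eps_lin.
- exact: smash_S_lin.
- exact: smash_coassoc.
- exact: smash_counitl.
- exact: smash_counitr.
- exact: smash_cop_mul.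
- exact: smash_cop_one.
- exact: smash_eps_mul.
- exact: smash_eps_one.
- exact: smash_S1.
- exact: smash_S2.
- exact: smash_S3.
- exact: smash_S4.
Qed.
End CocommutingAction.
End SmashProduct.

Theorem mainTheorem5 (K : fieldType) (H A : lmodType K)
  (HH : tensor H H) (AA : tensor A A) (HA : tensor H A) (AH : tensor A H)
  (XX : tensor (tT AH) (tT AH))
  (mulH : H -> H -> H) (oneH : H) (copH : H -> tT HH) (epsH : H -> K)
  (SH : H -> H)
  (mulA : A -> A -> A) (oneA : A) (copA : A -> tT AA) (epsA : A -> K)
  (SA : A -> A)
  (act : H -> A -> A) :
  hopf_quasigroup mulH oneH copH epsH SH ->
  hopf_quasigroup mulA oneA copA epsA SA ->
  quasimodule_hopf_quasigroup oneH copH epsH SH mulA oneA copA epsA act ->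
  (forall (h : H) (a : A),
     tev HH (fun x y => tm HA x (act y a)) (copH h)
     = tev HH (fun x y => tm HA y (act x a)) (copH h)) ->
  (forall (g h : H) (a : A), act g (act (SH h) a) = act (mulH g (SH h)) a) ->
  let R := @Rmap K H A HH HA AH copH act in
  [/\ @R_coalgebra_map K H A HH AA HA AH copH epsH copA epsA R,
      @R_left_multiplicative K H A HA AH mulA R,
      @R_normal K H A HA AH oneH oneA R,
      @R_left_conormal K H A HA AH epsA R &
      @R_right_S_multiplicative K H A HA AH mulH SH R]
  /\ @R_right_S_conormal K H A HA AH epsH SH R
  /\ hopf_quasigroup (@smash_mul K H A HH AH mulH copH mulA act)
       (@smash_one K H A AH oneH oneA)
       (@smash_cop K H A HH AA AH copH copA XX)
       (@smash_eps K H A AH epsH epsA)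
       (@smash_S K H A HH HA AH copH SH SA act).
Proof.
move=> hH hA qm act_cop_swap act_mul_antipode R.
split; [split|split].
- exact: (Rmap_coalgebra_map _ hH hA qm act_cop_swap).
- exact: (Rmap_left_multiplicative _ _ hH hA qm).
- exact: (Rmap_normal _ _ hH qm).
- exact: (Rmap_left_conormal _ _ hH hA qm).
- exact: (Rmap_right_S_multiplicative _ _ hH qm act_mul_antipode).
- exact: (Rmap_right_S_conormal _ hH qm act_cop_swap).
- exact: (smash_hopf_quasigroup _ hH hA qm act_cop_swap act_mul_antipode).
Qed.
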